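(* For every $\lambda>2$ there exist: the spaces $X_1=X_2=X_3=\{0,1\}$, the uniform probability measures $\nu_i$ on $X_i$, constants $0<m<M$ with $M/m=\lambda$, and a consistent family of probability measures $\mu_{12},\mu_{13},\mu_{23}$ on $X_i\times X_j$ with densities $\rho_{ij}=d\mu_{ij}/d(\nu_i\otimes\nu_j)$ satisfying $m\le\rho_{ij}\le M$, such that $\Pi(\mu_{12},\mu_{13},\mu_{23})$ is empty. (Hence the constant $\lambda_{32}$ in the density condition for $n=3$, $k=2$ cannot exceed $2$.)
   Context: A family $\mu_{12},\mu_{13},\mu_{23}$ of probability measures on $X_1\times X_2$, $X_1\times X_3$, $X_2\times X_3$ is consistent if any two of them have the same one-dimensional marginal on their common coordinate. $\Pi(\mu_{12},\mu_{13},\mu_{23})$ is the set of probability measures $\mu$ on $X_1\times X_2\times X_3$ whose projection onto $X_i\times X_j$ equals $\mu_{ij}$ for all $1\le i<j\le3$. The density condition: for given $\lambda$, whenever a consistent family has densities w.r.t. $\nu_i\otimes\nu_j$ bounded between $m$ and $M$ with $M/m\le\lambda$, a uniting measure exists. *)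

(* finite probability spaces X_i = {0,1} modelled by bool;
   a probability measure on a finite product of bools is its mass function. *)
From HB Require Import structures.
From mathcomp Require Import all_boot all_order all_algebra.
From mathcomp Require Import reals.
Set Implicit Arguments. Unset Strict Implicit. Unset Printing Implicit Defensive.
Import Order.TTheory GRing.Theory Num.Theory.
Local Open Scope ring_scope.

Section Defs.
Variable R : realType.

Definition prob2 (mu : bool -> bool -> R) : Prop :=
  (forall a b, 0 <= mu a b) /\ \sum_(a : bool) \sum_(b : bool) mu a b = 1.

Definition prob3 (mu : bool -> bool -> bool -> R) : Prop :=
  (forall a b c, 0 <= mu a b c) /\
  \sum_(a : bool) \sum_(b : bool) \sum_(c : bool) mu a b c = 1.

Definition nu (a : bool) : R := 1 / 2.

Definition density (mu : bool -> bool -> R) (a b : bool) : R :=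
  mu a b / (nu a * nu b).

Definition consistent (m12 m13 m23 : bool -> bool -> R) : Prop :=
  (forall a, \sum_(b : bool) m12 a b = \sum_(c : bool) m13 a c) /\
  (forall b, \sum_(a : bool) m12 a b = \sum_(c : bool) m23 b c) /\
  (forall c, \sum_(a : bool) m13 a c = \sum_(b : bool) m23 b c).

Definition inPi (m12 m13 m23 : bool -> bool -> R)
  (mu : bool -> bool -> bool -> R) : Prop :=
  prob3 mu /\
  (forall a b, \sum_(c : bool) mu a b c = m12 a b) /\
  (forall a c, \sum_(b : bool) mu a b c = m13 a c) /\
  (forall b c, \sum_(a : bool) mu a b c = m23 b c).

End Defs.

(* Three pairwise anti-correlated fair coins cannot be realised jointly.

   For an agreement probability q, let [anti q] be the law on {0,1}^2 putting
   mass q/2 on each diagonal point and (1-q)/2 on each off-diagonal point.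
   Three copies of it form a consistent family (all one-dimensional marginals
   are uniform) whose densities w.r.t. nu (x) nu take the two values 2q and
   2(1-q).  The obstruction is a counting fact: among three bits the number of
   disagreeing pairs is 0 or 2, so for any probability mu on {0,1}^3 the three
   pairwise disagreement masses add up to 2(1 - mu(000) - mu(111)) <= 2.  If mu
   unites the family, that sum equals 3(1-q), hence 3(1-q) <= 2.
   Choosing q = 1/(1+lam), the density ratio is (1-q)/q = lam, and lam > 2
   means exactly 3(1-q) > 2, so the family has no uniting measure. *)
From HB Require Import structures.
From mathcomp Require Import all_boot all_order all_algebra.
From mathcomp Require Import reals.
From mathcomp Require Import ring lra.
Import Order.TTheory GRing.Theory Num.Theory.
Local Open Scope ring_scope.

Section AntiCorrelated.
Context {R : realType}.

Definition anti (q : R) (a b : bool) : R :=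
  if a == b then q / 2 else (1 - q) / 2.

Lemma prob2_anti (q : R) : 0 <= q <= 1 -> prob2 (anti q).
Proof.
move=> /andP[q_ge0 q_le1]; split; last by rewrite !big_bool /anti /=; field.
by case; case; rewrite /anti /=; lra.
Qed.

Lemma anti_marginal (q : R) (a : bool) :
  \sum_(b : bool) anti q a b = 1 / 2 /\ \sum_(b : bool) anti q b a = 1 / 2.
Proof. by rewrite !big_bool /anti; case: a => /=; split; field. Qed.

Lemma consistent_anti (q : R) : consistent (anti q) (anti q) (anti q).
Proof.
by split; [|split] => x; rewrite ?(proj1 (anti_marginal q x))
  ?(proj2 (anti_marginal q x)).
Qed.

(* nu (x) nu is uniform with mass 1/4, so densities are 4 times the masses. *)
Lemma density_anti (q : R) (a b : bool) :
  density (anti q) a b = if a == b then 2 * q else 2 * (1 - q).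
Proof. by rewrite /density /nu /anti; case: (a == b); field. Qed.

(* Among three bits, 0 or 2 pairs disagree: the three pairwise disagreement
   masses of mu sum to twice the mass of the non-constant triples. *)
Lemma disagreement_sum (mu : bool -> bool -> bool -> R) :
  (\sum_(c : bool) mu true false c + \sum_(c : bool) mu false true c) +
  (\sum_(b : bool) mu true b false + \sum_(b : bool) mu false b true) +
  (\sum_(a : bool) mu a true false + \sum_(a : bool) mu a false true) =
  2 * (\sum_(a : bool) \sum_(b : bool) \sum_(c : bool) mu a b c
       - mu true true true - mu false false false).
Proof. by rewrite !big_bool /=; ring. Qed.

Lemma uniting_anti_bound (q : R) (mu : bool -> bool -> bool -> R) :
  inPi (anti q) (anti q) (anti q) mu -> 3 * (1 - q) <= 2.
Proof.
case=> [[mu_ge0 mu_sum] [m12 [m13 m23]]].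
have := disagreement_sum mu.
rewrite !m12 !m13 !m23 mu_sum /anti /=.
have := mu_ge0 true true true; have := mu_ge0 false false false; lra.
Qed.

End AntiCorrelated.

Theorem mainTheorem3 (R : realType) (lam : R) : 2 < lam ->
  exists m M : R, [/\ 0 < m, m < M & M / m = lam] /\
  exists m12 m13 m23 : bool -> bool -> R,
    [/\ prob2 m12, prob2 m13, prob2 m23 & consistent m12 m13 m23] /\
    (forall a b, m <= density m12 a b <= M) /\
    (forall a c, m <= density m13 a c <= M) /\
    (forall b c, m <= density m23 b c <= M) /\
    ~ (exists mu : bool -> bool -> bool -> R, inPi m12 m13 m23 mu).
Proof.
move=> lam_gt2; set q := (1 + lam)^-1.
have q_gt0 : 0 < q by rewrite invr_gt0; lra.
have disagree : 1 - q = lam * q by rewrite /q; field; lra.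
have q_le1 : 0 <= q <= 1 by apply/andP; split; nra.
have dens : forall a b, 2 * q <= density (anti q) a b <= 2 * (1 - q).
  by move=> a b; rewrite density_anti; case: (a == b); apply/andP; nra.
exists (2 * q), (2 * (1 - q)); split.
  by split; [lra | nra | rewrite disagree; field; lra].
exists (anti q), (anti q), (anti q); split.
  by split; [exact: prob2_anti.. | exact: consistent_anti].
do 3 (split; first exact: dens).
case=> mu /uniting_anti_bound; nra.
Qed.
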